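(* For each $\varepsilon>0$ there exists $y_0=y_0(\varepsilon)>2$ such that for every $y\in[2,y_0]$ and every $R>2$, the function $x\mapsto g_R(x,y)\,x^{-\varepsilon}$ is non-increasing on $(0,\infty)$.
   Context: Let $\xi$ be a nondecreasing $C^2$ function on $[0,\infty)$ with $\xi(x)=(x-1)^3\vee0$ for $x\in[0,3/2]$ and $\xi(x)=1$ for $x\ge2$. For $x\ge0$, $y\ge2$: $\zeta(x,y)=2x+(yx^{y-1}-2x)\xi(x)$. For $R>2$: $g_R(x,y)=\sqrt{(\partial_x\zeta)(x\wedge R,y)}$. *)

From Stdlib Require Import Reals Lra.
Open Scope R_scope.

Definition zeta (xi : R -> R) (x y : R) : R :=
  2 * x + (y * Rpower x (y - 1) - 2 * x) * xi x.

(* g_R(x,y) = sqrt( (d_x zeta)(min x R, y) ), where dzeta is the partial derivative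
   of zeta in x (characterised in the theorem by derivable_pt_lim). *)
Definition gR (dzeta : R -> R -> R) (Rr x y : R) : R :=
  sqrt (dzeta (Rmin x Rr) y).

(* With ζ' = ∂ₓζ, the map x ↦ g_R(x,y) x^(-ε) is the square root of
   ζ'(min(x,R)) x^(-2ε); as x^(-ε) decreases, it suffices that ζ'(x) x^(-2ε) is non-increasing,
   i.e. that x ζ''(x) ≤ 2ε ζ'(x) for x > 0.  For x < 1, ξ = 0 and ζ = 2x; for
   x > 2, ξ = 1 and ζ = x^y, where the condition reads y - 2 ≤ 2ε.  On [1,2],
   where ξ' and ξ'' are bounded by some M, one has ζ' = 2 + O(M (y-2)) and
   x ζ'' = O(M (y-2)), since at y = 2 the function ζ is exactly 2x; hence
   y - 2 ≤ min(1,ε)/(72 M) suffices. *)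

From Stdlib Require Import Reals Lra.
Open Scope R_scope.

Lemma derivable_pt_lim_eq f x l1 l2 :
  derivable_pt_lim f x l1 -> l1 = l2 -> derivable_pt_lim f x l2.
Proof. now intros H <-. Qed.

Lemma derivable_pt_lim_locally_const f a b c x l :
  a < x < b -> (forall z, a < z < b -> f z = c) -> derivable_pt_lim f x l -> l = 0.
Proof.
  intros Hx Hf Hd.
  apply (uniqueness_limite f x); [exact Hd |].
  apply (derivable_pt_lim_locally_ext (fun _ => c) f x a b 0 Hx).
  - now intros z Hz; rewrite Hf.
  - apply derivable_pt_lim_const.
Qed.

Lemma continuity_bounded_segment f a b :
  a <= b -> (forall x, a <= x <= b -> continuity_pt f x) ->
  exists M, forall x, a <= x <= b -> Rabs (f x) <= M.
Proof.
  intros Hab Hf.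
  destruct (continuity_ab_maj (fun x => Rabs (f x)) a b Hab) as [m [Hm _]].
  - intros x Hx. apply (continuity_pt_comp f Rabs); [now apply Hf | apply Rcontinuity_abs].
  - now exists (Rabs (f m)).
Qed.

Lemma antitone_of_derive_nonpos f f' :
  (forall x, 0 < x -> derivable_pt_lim f x (f' x)) -> (forall x, 0 < x -> f' x <= 0) ->
  forall u v, 0 < u -> u <= v -> f v <= f u.
Proof.
  intros Hd Hneg u v Hu [Huv | <-]; [| lra].
  destruct (MVT_cor2 f f' u v Huv) as [c [Hc Hcuv]].
  - intros c Hc. apply Hd. lra.
  - pose proof (Hneg c ltac:(lra)). nra.
Qed.

Lemma Rpower_pos x e : 0 < Rpower x e.
Proof. apply exp_pos. Qed.

Lemma Rpower_antitone_nonpos a b e : 0 < a -> a <= b -> e <= 0 -> Rpower b e <= Rpower a e.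
Proof.
  intros Ha Hab He.
  replace e with (- - e) by ring. rewrite (Rpower_Ropp b (- e)), (Rpower_Ropp a (- e)).
  apply Rinv_le_contravar; [apply Rpower_pos |].
  apply Rle_Rpower_l; lra.
Qed.

Lemma Rpower_ge1 x e : 1 <= x -> 0 <= e -> 1 <= Rpower x e.
Proof. intros Hx He. rewrite <- (Rpower_O x) by lra. now apply Rle_Rpower. Qed.

Lemma Rpower_le_1_plus x e d : 1 <= x <= 2 -> 0 <= e <= d -> d <= 1/2 -> Rpower x e <= 1 + 2 * d.
Proof.
  intros Hx He Hd.
  assert (Hln : 0 <= ln x <= 1).
  { split.
    - destruct (Rle_lt_or_eq 1 x) as [h | <-]; [lra | | rewrite ln_1; lra].
      rewrite <- ln_1. left. apply ln_increasing; lra.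
    - pose proof (exp_ineq1_le (ln x)). rewrite exp_ln in H by lra. lra. }
  apply Rle_trans with (exp d).
  - unfold Rpower. destruct (Rle_lt_or_eq (e * ln x) d) as [h | ->]; [nra | | lra].
    left. now apply exp_increasing.
  (* exp d <= 1 / (1 - d) <= 1 + 2 d *)
  - pose proof (exp_ineq1_le (- d)).
    assert (exp d * exp (- d) = 1) by (rewrite <- exp_plus, Rplus_opp_r; apply exp_0).
    pose proof (exp_pos d). nra.
Qed.

Lemma Rpower_weighted_antitone h h' c :
  (forall x, 0 < x -> derivable_pt_lim h x (h' x)) ->
  (forall x, 0 < x -> x * h' x <= c * h x) ->
  forall u v, 0 < u -> u <= v -> h v * Rpower v (- c) <= h u * Rpower u (- c).
Proof.
  intros Hd Hle.
  apply (antitone_of_derive_nonpos _ (fun x => Rpower x (- c - 1) * (x * h' x - c * h x))).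
  - intros x Hx. eapply derivable_pt_lim_eq.
    + apply derivable_pt_lim_mult; [now apply Hd | now apply derivable_pt_lim_power].
    + cbv beta. replace (Rpower x (- c)) with (Rpower x (- c - 1) * Rpower x 1).
      * rewrite Rpower_1 by lra. ring.
      * rewrite <- Rpower_plus. f_equal; ring.
  - intros x Hx. pose proof (Rpower_pos x (- c - 1)). pose proof (Hle x Hx). nra.
Qed.

Lemma sqrt_mul_Rpower z x c : sqrt z * Rpower x (- c) = sqrt (z * Rpower x (- (2 * c))).
Proof.
  replace (- (2 * c)) with (- c + - c) by ring. rewrite Rpower_plus.
  pose proof (Rpower_pos x (- c)).
  destruct (Rle_or_lt 0 z).
  - rewrite sqrt_mult_alt, sqrt_square; lra.
  - rewrite !sqrt_neg_0; nra.
Qed.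

Lemma sqrt_truncated_antitone h c Rr :
  0 < Rr -> 0 <= c ->
  (forall u v, 0 < u -> u <= v -> h v * Rpower v (- (2 * c)) <= h u * Rpower u (- (2 * c))) ->
  forall a b, 0 < a -> a <= b ->
    sqrt (h (Rmin b Rr)) * Rpower b (- c) <= sqrt (h (Rmin a Rr)) * Rpower a (- c).
Proof.
  intros HR Hc Hh a b Ha Hab.
  destruct (Rle_or_lt a Rr) as [haR | hRa].
  - rewrite (Rmin_left a Rr haR).
    set (b' := Rmin b Rr).
    assert (Hb' : a <= b' <= b) by (split; [apply Rmin_glb | apply Rmin_l]; lra).
    apply Rle_trans with (sqrt (h b') * Rpower b' (- c)).
    + apply Rmult_le_compat_l; [apply sqrt_pos | apply Rpower_antitone_nonpos; lra].
    + rewrite !sqrt_mul_Rpower. apply sqrt_le_1_alt, Hh; lra.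
  - rewrite !Rmin_right by lra.
    apply Rmult_le_compat_l; [apply sqrt_pos | apply Rpower_antitone_nonpos; lra].
Qed.

Lemma growth_factors_small d y p :
  0 <= d <= 1/72 -> 2 <= y <= 2 + d -> 1 <= p <= 1 + 2 * d ->
  0 <= y * (y - 1) * p - 2 <= 8 * d /\ 0 <= y * p - 2 <= 6 * d.
Proof.
  intros Hd Hy Hp.
  assert (Hyy : 2 <= y * (y - 1) <= 2 + 3 * d + d * d) by nra.
  assert (y * (y - 1) * p <= (2 + 3 * d + d * d) * (1 + 2 * d))
    by (apply Rmult_le_compat; nra).
  split; split; nra.
Qed.

(* The instance used is t = y - 2, A = y (y-1) x^(y-2) - 2, B = y x^(y-2) - 2,
   and (u, a, b) = (ξ, ξ', ξ'') at x ∈ [1,2]. *)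
Lemma perturbation_le d M eps t A B x u a b :
  0 < d -> 1 <= M -> 72 * M * d <= 1 -> 72 * M * d <= eps ->
  0 <= t <= d -> 0 <= A <= 8 * d -> 0 <= B <= 6 * d -> 1 <= x <= 2 -> 0 <= u <= 1 ->
  Rabs a <= M -> Rabs b <= M ->
  (A + 2) * t * u + 2 * A * a * x + x * B * b * x <= 2 * eps * (2 + A * u + x * B * a).
Proof.
  intros Hd HM H1 Heps Ht HA HB Hx Hu Ha Hb.
  assert (Ha' : - M <= a <= M) by (clear - Ha; split_Rabs; lra).
  assert (Hb' : - M <= b <= M) by (clear - Hb; split_Rabs; lra).
  clear Ha Hb.
  assert (Hd72 : d <= 1/72) by nra.
  assert (T1 : (A + 2) * t * u <= 3 * d).
  { assert ((A + 2) * t <= 3 * d) by nra. nra. }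
  assert (T2 : 2 * A * a * x <= 32 * d * M).
  { assert (A * a <= A * M) by nra.
    assert ((A * M - A * a) * x >= 0) by nra.
    assert (0 <= A * M <= 8 * d * M) by (split; nra).
    assert (A * M * x <= 16 * d * M) by nra. nra. }
  assert (T3 : x * B * b * x <= 24 * d * M).
  { assert (B * b <= B * M) by nra.
    assert ((B * M - B * b) * (x * x) >= 0) by nra.
    assert (0 <= B * M <= 6 * d * M) by (split; nra).
    assert (x * x <= 4) by nra.
    assert (B * M * (x * x) <= 24 * d * M) by nra. nra. }
  assert (T4 : - 12 * d * M <= x * B * a).
  { assert (- (B * M) <= B * a) by nra.
    assert ((B * a + B * M) * x >= 0) by nra.
    assert (0 <= B * M <= 6 * d * M) by (split; nra).
    assert (B * M * x <= 12 * d * M) by nra. nra. }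
  assert (0 <= A * u) by nra.
  assert (d <= d * M) by nra.
  assert (2 + A * u + x * B * a >= 11/6) by lra.
  nra.
Qed.

Section Zeta.

Variables xi xi1 xi2 : R -> R.
Hypothesis xi_derive : forall x, derivable_pt_lim xi x (xi1 x).
Hypothesis xi1_derive : forall x, derivable_pt_lim xi1 x (xi2 x).
Hypothesis xi2_continuous : continuity xi2.
Hypothesis xi_nondecreasing : forall a b, 0 <= a -> a <= b -> xi a <= xi b.
Hypothesis xi_near_1 : forall x, 0 <= x <= 3/2 -> xi x = Rmax ((x - 1) ^ 3) 0.
Hypothesis xi_ge_2 : forall x, 2 <= x -> xi x = 1.

Lemma xi_lt_1 x : 0 < x < 1 -> xi x = 0.
Proof.
  intros Hx. rewrite xi_near_1 by lra. apply Rmax_right.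
  assert (0 <= (x - 1) * (x - 1)) by nra. simpl. nra.
Qed.

Lemma xi1_lt_1 x : 0 < x < 1 -> xi1 x = 0.
Proof. intros Hx. exact (derivable_pt_lim_locally_const _ 0 1 0 x _ Hx xi_lt_1 (xi_derive x)). Qed.

Lemma xi2_lt_1 x : 0 < x < 1 -> xi2 x = 0.
Proof. intros Hx. exact (derivable_pt_lim_locally_const _ 0 1 0 x _ Hx xi1_lt_1 (xi1_derive x)). Qed.

Lemma xi1_gt_2 x : 2 < x -> xi1 x = 0.
Proof.
  intros Hx. apply (derivable_pt_lim_locally_const xi 2 (x + 1) 1 x); [lra | | apply xi_derive].
  intros z Hz. apply xi_ge_2. lra.
Qed.

Lemma xi2_gt_2 x : 2 < x -> xi2 x = 0.
Proof.
  intros Hx. apply (derivable_pt_lim_locally_const xi1 2 (x + 1) 0 x); [lra | | apply xi1_derive].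
  intros z Hz. apply xi1_gt_2. lra.
Qed.

Lemma xi_between_1_2 x : 1 <= x <= 2 -> 0 <= xi x <= 1.
Proof.
  intros Hx. rewrite <- (xi_ge_2 2) by lra.
  assert (xi 1 = 0) by (rewrite xi_near_1 by lra; apply Rmax_right; simpl; lra).
  split; [rewrite <- H |]; apply xi_nondecreasing; lra.
Qed.

Lemma xi1_xi2_bounded : exists M, 1 <= M /\
  forall x, 1 <= x <= 2 -> Rabs (xi1 x) <= M /\ Rabs (xi2 x) <= M.
Proof.
  destruct (continuity_bounded_segment xi1 1 2) as [M1 HM1]; [lra | |].
  { intros x _. apply derivable_continuous_pt. exists (xi2 x). apply xi1_derive. }
  destruct (continuity_bounded_segment xi2 1 2) as [M2 HM2]; [lra | now intros x _ |].
  exists (1 + Rabs M1 + Rabs M2). split.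
  - pose proof (Rabs_pos M1). pose proof (Rabs_pos M2). lra.
  - intros x Hx. pose proof (HM1 x Hx). pose proof (HM2 x Hx).
    pose proof (Rle_abs M1). pose proof (Rle_abs M2).
    pose proof (Rabs_pos M1). pose proof (Rabs_pos M2). lra.
Qed.

Definition zeta_dx y x :=
  2 + (y * (y - 1) * Rpower x (y - 2) - 2) * xi x + (y * Rpower x (y - 1) - 2 * x) * xi1 x.

Definition zeta_dxx y x :=
  y * (y - 1) * (y - 2) * Rpower x (y - 3) * xi x
  + 2 * (y * (y - 1) * Rpower x (y - 2) - 2) * xi1 x
  + (y * Rpower x (y - 1) - 2 * x) * xi2 x.

Lemma zeta_derive y x : 0 < x -> derivable_pt_lim (fun t => zeta xi t y) x (zeta_dx y x).
Proof.
  intros Hx. unfold zeta, zeta_dx. eapply derivable_pt_lim_eq.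
  - apply derivable_pt_lim_plus; [apply derivable_pt_lim_scal, derivable_pt_lim_id |].
    apply derivable_pt_lim_mult; [| apply xi_derive].
    apply derivable_pt_lim_minus; apply derivable_pt_lim_scal;
      [now apply derivable_pt_lim_power | apply derivable_pt_lim_id].
  - replace (y - 1 - 1) with (y - 2) by ring. ring.
Qed.

Lemma zeta_dx_derive y x : 0 < x -> derivable_pt_lim (zeta_dx y) x (zeta_dxx y x).
Proof.
  intros Hx. unfold zeta_dx, zeta_dxx. eapply derivable_pt_lim_eq.
  - apply derivable_pt_lim_plus.
    + apply derivable_pt_lim_plus; [apply derivable_pt_lim_const |].
      apply derivable_pt_lim_mult; [| apply xi_derive].
      apply derivable_pt_lim_minus; [| apply derivable_pt_lim_const].
      apply derivable_pt_lim_scal. now apply derivable_pt_lim_power.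
    + apply derivable_pt_lim_mult; [| apply xi1_derive].
      apply derivable_pt_lim_minus; apply derivable_pt_lim_scal;
        [now apply derivable_pt_lim_power | apply derivable_pt_lim_id].
  - replace (y - 2 - 1) with (y - 3) by ring. replace (y - 1 - 1) with (y - 2) by ring. ring.
Qed.

Lemma zeta_dxx_le M d eps y x :
  1 <= M -> (forall z, 1 <= z <= 2 -> Rabs (xi1 z) <= M /\ Rabs (xi2 z) <= M) ->
  0 < d -> 72 * M * d <= 1 -> 72 * M * d <= eps ->
  2 <= y <= 2 + d -> 0 < x ->
  x * zeta_dxx y x <= 2 * eps * zeta_dx y x.
Proof.
  intros HM Hbound Hd HMd1 HMd Hy Hx.
  assert (Heps : 0 < eps) by nra.
  pose (p := Rpower x (y - 2)).
  assert (Hp : 0 < p) by apply Rpower_pos.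
  assert (Ep1 : Rpower x (y - 1) = x * p).
  { unfold p. replace (y - 1) with (y - 2 + 1) by ring.
    rewrite Rpower_plus, Rpower_1 by lra. ring. }
  assert (Ep3 : x * Rpower x (y - 3) = p).
  { unfold p. replace (y - 2) with (y - 3 + 1) by ring.
    rewrite Rpower_plus, Rpower_1 by lra. ring. }
  assert (Hdxx : x * zeta_dxx y x = y * (y - 1) * (y - 2) * p * xi x
      + 2 * (y * (y - 1) * p - 2) * xi1 x * x + (y * x * p - 2 * x) * xi2 x * x)
    by (unfold zeta_dxx; change (Rpower x (y - 2)) with p; rewrite Ep1, <- Ep3; ring).
  assert (Hdx : zeta_dx y x = 2 + (y * (y - 1) * p - 2) * xi x + (y * x * p - 2 * x) * xi1 x)
    by (unfold zeta_dx; change (Rpower x (y - 2)) with p; rewrite Ep1; ring).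
  rewrite Hdxx, Hdx.
  destruct (Rlt_or_le x 1) as [Hx1 | Hx1].
  { rewrite xi_lt_1, xi1_lt_1, xi2_lt_1 by lra. lra. }
  destruct (Rle_or_lt x 2) as [Hx2 | Hx2].
  - destruct (Hbound x) as [Ha Hb]; [lra |].
    destruct (growth_factors_small d y p) as [HA HB]; [nra | lra | |].
    { split; [apply Rpower_ge1 | apply Rpower_le_1_plus with (d := d)]; nra. }
    pose proof (perturbation_le d M eps (y - 2) (y * (y - 1) * p - 2) (y * p - 2) x
      (xi x) (xi1 x) (xi2 x) Hd HM HMd1 HMd ltac:(lra) HA HB ltac:(lra)
      (xi_between_1_2 x ltac:(lra)) Ha Hb).
    lra.
  - rewrite xi_ge_2, xi1_gt_2, xi2_gt_2 by lra.
    assert (0 <= y * (y - 1) * p) by (apply Rmult_le_pos; nra).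
    assert (y - 2 <= 2 * eps) by nra.
    nra.
Qed.

End Zeta.

Theorem mainTheorem19 :
  forall (xi xi1 xi2 : R -> R) (dzeta : R -> R -> R),
    (forall x, derivable_pt_lim xi x (xi1 x)) ->
    (forall x, derivable_pt_lim xi1 x (xi2 x)) ->
    continuity xi2 ->
    (forall a b, 0 <= a -> a <= b -> xi a <= xi b) ->
    (forall x, 0 <= x <= 3/2 -> xi x = Rmax ((x - 1) ^ 3) 0) ->
    (forall x, 2 <= x -> xi x = 1) ->
    (forall x y, 0 < x -> 2 <= y ->
       derivable_pt_lim (fun t => zeta xi t y) x (dzeta x y)) ->
    forall eps : R, 0 < eps ->
    exists y0 : R, 2 < y0 /\
      forall y Rr : R, 2 <= y <= y0 -> 2 < Rr ->
        forall a b : R, 0 < a -> a <= b ->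
          gR dzeta Rr b y * Rpower b (- eps) <= gR dzeta Rr a y * Rpower a (- eps).
Proof.
  intros xi xi1 xi2 dzeta Hxi Hxi1 Hxi2 Hmono Hnear Hge2 Hdzeta eps Heps.
  destruct (xi1_xi2_bounded _ _ Hxi1 Hxi2) as [M [HM Hbound]].
  pose proof (Rmin_l 1 eps). pose proof (Rmin_r 1 eps).
  assert (0 < Rmin 1 eps) by (apply Rmin_glb_lt; lra).
  set (d := Rmin 1 eps / (72 * M)).
  assert (HMd : 72 * M * d = Rmin 1 eps) by (unfold d; field; lra).
  assert (Hd : 0 < d) by (apply Rdiv_lt_0_compat; lra).
  exists (2 + d). split; [lra |].
  intros y Rr Hy HR. unfold gR.
  apply (sqrt_truncated_antitone (fun x => dzeta x y)); [lra | lra |].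
  intros u v Hu Huv.
  assert (Hdx : forall x, 0 < x -> dzeta x y = zeta_dx xi xi1 y x).
  { intros x Hx. apply (uniqueness_limite (fun t => zeta xi t y) x).
    - apply Hdzeta; lra.
    - now apply zeta_derive. }
  rewrite !Hdx by lra.
  apply (Rpower_weighted_antitone _ (zeta_dxx xi xi1 xi2 y)); [| | lra | lra].
  - intros x Hx. now apply zeta_dx_derive.
  - intros x Hx. apply (zeta_dxx_le xi xi1 xi2 Hxi Hxi1 Hmono Hnear Hge2 M d eps y x HM Hbound); lra.
Qed.
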